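(* Let $X$ be a Tychonoff regular locally Menger $p$-space and let $Y=bX\setminus X$ be a remainder of $X$ in some compactification $bX$. Then there is a compact subspace $K$ of $Y$ such that every closed subset $F$ of $Y$ with $F\cap K=\emptyset$ is a Lindelöf $p$-space (and hence every such $F$ is an $s$-space).
   Context: A space $X$ is Menger if for each sequence $(\mathcal{U}_n)$ of open covers of $X$ there is a sequence $(\mathcal{V}_n)$ with each $\mathcal{V}_n$ a finite subset of $\mathcal{U}_n$ and $\bigcup_{n}\bigcup\mathcal{V}_n=X$. A space $X$ is locally Menger if for each $x\in X$ there exist an open set $U$ and a Menger subspace $Y$ of $X$ with $x\in U\subseteq Y$. A Tychonoff space $X$ is a $p$-space if in some (equivalently, any) compactification $bX$ there is a countable family $\{\mathcal{U}_n:n\in\mathbb{N}\}$, each $\mathcal{U}_n$ a collection of open subsets of $bX$, such that for each $x\in X$, $x\in\bigcap_{n}\bigcup\{U\in\mathcal{U}_n:x\in U\}\subseteq X$. For a family $\mathcal{C}$ of subsets of $Z$, $\mathcal{C}_\delta$ is the family of intersections of nonempty subfamilies of $\mathcal{C}$ and $\mathcal{C}_{\delta,\sigma}$ the family of unions of subfamilies of $\mathcal{C}_\delta$; $\mathcal{C}$ is a source for $Y\subseteq Z$ if $Y\in\mathcal{C}_{\delta,\sigma}$. A Tychonoff space $X$ is an $s$-space if there is a countable source for $X$ in some (equivalently, any) compactification $bX$ consisting of open subsets of $bX$. *)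

(* A Tychonoff space X with a compactification bX is
   modelled as a dense subset X of a compact Hausdorff space T (= bX).
   All notions below are for subspaces A of T, formulated with the subspace
   topology (open sets of A are traces V `&` A of open sets V of T). *)
From HB Require Import structures.
From mathcomp Require Import all_boot all_order all_algebra.
From mathcomp Require Import all_classical all_reals all_analysis.
Set Implicit Arguments. Unset Strict Implicit. Unset Printing Implicit Defensive.
Local Open Scope classical_set_scope.

Section Defs.
Context {T : topologicalType}.

Definition rel_open (A W : set T) := exists V : set T, open V /\ W = V `&` A.

Definition rel_closed (A F : set T) := exists C : set T, closed C /\ F = C `&` A.

Definition open_cover_of (A : set T) (U : set (set T)) :=
  (forall W, U W -> rel_open A W) /\ A `<=` \bigcup_(W in U) W.

Definition menger (A : set T) :=
  forall u : nat -> set (set T), (forall n, open_cover_of A (u n)) ->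
  exists v : nat -> set (set T),
    (forall n, v n `<=` u n /\ finite_set (v n)) /\
    A `<=` \bigcup_n \bigcup_(W in v n) W.

Definition lindelof (A : set T) :=
  forall U : set (set T), open_cover_of A U ->
  exists V : set (set T), V `<=` U /\ countable V /\ A `<=` \bigcup_(W in V) W.

Definition locally_menger (A : set T) :=
  forall x, A x -> exists U M : set T,
    rel_open A U /\ M `<=` A /\ menger M /\ U x /\ U `<=` M.

(* p-space, tested in the compactification closure A of A (T compact Hausdorff):
   a countable family (U_n) of collections of open subsets of closure A with
   x \in \bigcap_n St(x, U_n) \subseteq A for every x in A. *)
Definition p_space (A : set T) :=
  exists U : nat -> set (set T),
    (forall n W, U n W -> rel_open (closure A) W) /\
    forall x, A x ->
      x \in \bigcap_n \bigcup_(W in [set W | U n W /\ W x]) W /\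
      \bigcap_n \bigcup_(W in [set W | U n W /\ W x]) W `<=` A.

(* s-space, tested in the compactification closure A: a countable family C of
   open subsets of closure A such that A is a union of intersections of
   nonempty subfamilies of C. *)
Definition s_space (A : set T) :=
  exists C : set (set T),
    countable C /\ (forall W, C W -> rel_open (closure A) W) /\
    exists D : set (set (set T)),
      (forall S, D S -> S `<=` C /\ S !=set0) /\
      A = \bigcup_(S in D) \bigcap_(W in S) W.

End Defs.

(* Call an open set N of bX good when closure N `&` X is Lindelof.  Local
   Mengerness and the regularity of bX give every point of X a good
   neighbourhood, so the complement K of the union of the good sets is a compact
   part of the remainder.  As X is a p-space, every compact subset of X lies in
   a G_delta subset of bX contained in X; for the complement of an open cover of
   the remainder this shows that the remainder, hence each of its closed subsets
   F, is Lindelof.  If F misses K, countably many good sets cover F and the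
   traces on X of their closures form a Lindelof set Z.  Covering Z, for each
   level U_n of a pluming of X, by countably many open sets W with closure in a
   member of U_n, the two-set covers {member of U_n around closure W, complement
   of closure W} together with the good sets give a countable pluming of F, so F
   is a p-space and an s-space. *)

From HB Require Import structures.
From mathcomp Require Import all_boot all_order all_algebra.
From mathcomp Require Import all_classical all_reals all_analysis.
From mathcomp Require Import finmap.
Set Implicit Arguments. Unset Strict Implicit. Unset Printing Implicit Defensive.
Local Open Scope classical_set_scope.

(* [compact_cover] is stated for pointed spaces only. *)
Section PointedCover.
Variables (T : topologicalType) (x0 : T).

Definition pointed_at : Type := T.
HB.instance Definition _ := Topological.on pointed_at.
HB.instance Definition _ := isPointed.Build pointed_at x0.

Lemma compact_cover_compact_at (A : set T) : compact A -> cover_compact A.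
Proof.
move=> cA.
exact: eq_ind _ id cA _ (congr1 (fun P => P A) (@compact_cover pointed_at)).
Qed.

End PointedCover.

Section Compactness.
Context {T : topologicalType}.

Lemma compact_cover_compact (A : set T) : compact A -> cover_compact A.
Proof.
have [[a _]|A0] := pselect (A !=set0); first exact: (@compact_cover_compact_at T a).
move=> _ I D f _ _; exists fset0 => // x Ax; exfalso; apply: A0; by exists x.
Qed.

Lemma compact_nat_fip (K : nat -> set T) : compact [set: T] ->
  (forall i, closed (K i)) -> (forall n, \bigcap_(i < n) K i !=set0) ->
  \bigcap_i K i !=set0.
Proof.
move=> cT Kc Kn; apply: contrapT => K0.
have [D' _ cov] : finite_subset_cover [set: nat] (fun i => ~` K i) [set: T].
  apply: (compact_cover_compact cT) => [i _|x _]; first by rewrite openC.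
  apply: contrapT => nx; apply: K0; exists x => i _.
  by apply: contrapT => nKi; apply: nx; exists i.
have [x Kx] := Kn (\max_(i <- D') i).+1.
have [i D'i] := cov x I; apply; apply: Kx; rewrite /= ltnS.
exact: leq_bigmax_seq.
Qed.

Lemma open_bigcap_lt (n : nat) (f : nat -> set T) :
  (forall i, (i < n)%N -> open (f i)) -> open (\bigcap_(i < n) f i).
Proof.
move=> fo; rewrite bigcap_mkord.
by apply: (big_ind open openT openI) => i _; apply: fo.
Qed.

Lemma open_nbhs_closure_sub (x : T) (W : set T) :
  compact [set: T] -> hausdorff_space T -> open W -> W x ->
  exists2 W', open W' /\ W' x & closure W' `<=` W.
Proof.
move=> cT hT oW Wx.
have [N Nx NW] : exists2 N, nbhs x N & closure N `<=` W :=
  @compact_regular T x _ hT cT filterT W (open_nbhs_nbhs (conj oW Wx)).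
exists (interior N).
  by split; [exact: open_interior | exact: nbhs_singleton (nbhs_interior Nx)].
by apply: subset_trans NW; apply: closureS; exact: interior_subset.
Qed.

End Compactness.

Lemma countable_image_lift (A B : Type) (f : A -> B) (G : set A) (V : set B) :
  V `<=` f @` G -> countable V ->
  exists G', G' `<=` G /\ countable G' /\ V `<=` f @` G'.
Proof.
elim/Ppointed: A => A in f G *.
  by move=> VG _; exists G; do !split => //; rewrite emptyE.
move=> VG cV; have /choice [g Hg] : forall b, exists a, V b -> G a /\ f a = b.
  move=> b; have [Vb|nVb] := pselect (V b); last by exists point.
  by have [a Ga fab] := VG b Vb; exists a.
exists (g @` V); split; first by move=> _ [b Vb <-]; have [] := Hg b Vb.
split; first exact: sub_countable (card_image_le _ _) cV.
by move=> b Vb; exists (g b); [exists b | have [] := Hg b Vb].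
Qed.

Section Lindelof.
Context {T : topologicalType}.

Definition cover_lindelof (A : set T) :=
  forall G : set (set T), (forall W, G W -> open W) ->
  A `<=` \bigcup_(W in G) W ->
  exists G', G' `<=` G /\ countable G' /\ A `<=` \bigcup_(W in G') W.

Lemma lindelofP (A : set T) : lindelof A <-> cover_lindelof A.
Proof.
split=> [lA G oG AG|lA U [rU AU]].
  have [|V [VG [cV AV]]] := lA ((fun W => W `&` A) @` G).
    split; first by move=> _ [W GW <-]; exists W; split => //; exact: oG.
    by move=> x Ax; have [W GW Wx] := AG x Ax; exists (W `&` A) => //; exists W.
  have [G' [G'G [cG' VG']]] := countable_image_lift VG cV.
  exists G'; split => //; split => // x Ax.
  by have [_ /VG' [W G'W <-] [Wx _]] := AV x Ax; exists W.
have [||G' [G'G [cG' AG']]] := lA [set V | open V /\ U (V `&` A)].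
  by move=> V [].
  move=> x Ax; have [W UW Wx] := AU x Ax; have [V [oV eW]] := rU W UW.
  by exists V; [split; rewrite // -eW | move: Wx; rewrite eW => -[]].
exists ((fun V => V `&` A) @` G'); split; first by move=> _ [V /G'G [_ UV] <-].
split; first exact: sub_countable (card_image_le _ _) cG'.
by move=> x Ax; have [V G'V Vx] := AG' x Ax; exists (V `&` A) => //; exists V.
Qed.

Lemma menger_lindelof (M : set T) : menger M -> lindelof M.
Proof.
move=> mM U cU; have [v [vU Mv]] := mM (fun=> U) (fun=> cU).
exists (\bigcup_n v n); split; first by move=> W [n _ /(proj1 (vU n))].
split; last by move=> x /Mv [n _ [W vW Wx]]; exists W => //; exists n.
apply: bigcup_countable => // n _; apply: finite_set_countable.
exact: (proj2 (vU n)).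
Qed.

Lemma cover_lindelofI_closed (A D : set T) :
  cover_lindelof A -> closed D -> cover_lindelof (D `&` A).
Proof.
move=> lA cD G oG DAG.
have [||G' [G'G [cG' AG']]] := lA (G `|` [set ~` D]).
  by move=> W [/oG|->] //; rewrite openC.
  move=> x Ax; have [Dx|nDx] := pselect (D x); last by exists (~` D); [right|].
  by have [W GW Wx] := DAG x (conj Dx Ax); exists W; [left|].
exists (G' `&` G); split; first by move=> W [].
split; first exact: sub_countable (subset_card_le (@subIsetl _ _ _)) cG'.
move=> x [Dx Ax]; have [W G'W Wx] := AG' x Ax.
by have [GW|eW] := G'G W G'W; [exists W | move: Wx; rewrite eW].
Qed.

Lemma cover_lindelof_bigcup (I : Type) (D : set I) (A : I -> set T) :
  countable D -> (forall i, D i -> cover_lindelof (A i)) ->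
  cover_lindelof (\bigcup_(i in D) A i).
Proof.
move=> cD lA G oG AG.
have /choice [g Hg] : forall i, exists G',
    D i -> G' `<=` G /\ countable G' /\ A i `<=` \bigcup_(W in G') W.
  move=> i; have [Di|nDi] := pselect (D i); last by exists set0.
  have [G' HG'] := lA i Di G oG (fun x Aix => AG x (ex_intro2 _ _ i Di Aix)).
  by exists G'.
exists (\bigcup_(i in D) g i); split; first by move=> W [i Di /(proj1 (Hg i Di))].
split; first by apply: bigcup_countable => // i /Hg [_ []].
move=> x [i Di Aix]; have [_ [_ /(_ x Aix) [W giW Wx]]] := Hg i Di.
by exists W => //; exists i.
Qed.

End Lindelof.

Section Pluming.
Context {T : topologicalType}.

(* Arhangel'skii's pluming: [x \in \bigcap_i St(x, V i) `<=` A] for [x] in [A]. *)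
Definition pluming (I : Type) (A : set T) (V : I -> set (set T)) :=
  (forall x, A x -> forall i, exists2 W, V i W & W x) /\
  (forall x z, A x -> (forall i, exists2 W, V i W & W x /\ W z) -> A z).

Lemma p_space_dense_pluming (A : set T) : closure A = [set: T] -> p_space A ->
  exists U : nat -> set (set T), (forall n W, U n W -> open W) /\ pluming A U.
Proof.
move=> dA [U [Uo HU]]; exists U; split.
  by move=> n W /Uo [V [oV ->]]; rewrite dA setIT.
split=> [x Ax n|x z Ax xz].
  by have [/set_mem /(_ n I) [W [UW Wx] _] _] := HU x Ax; exists W.
by apply: (proj2 (HU x Ax)) => n _; have [W UW [Wx Wz]] := xz n; exists W.
Qed.

Variables (J : countType) (j0 : J) (A : set T) (V : J -> set (set T)).
Hypothesis V_open : forall i W, V i W -> rel_open (closure A) W.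
Hypothesis V_pluming : pluming A V.

Lemma pluming_p_space : p_space A.
Proof.
have [Vcov Vsep] := V_pluming.
exists (fun m => oapp V (V j0) (choice.unpickle m)); split.
  by move=> m W; case: (choice.unpickle m) => [i|]; apply: V_open.
move=> x Ax; split.
  apply/mem_set => m _.
  have [W VW Wx] := Vcov x Ax (oapp id j0 (choice.unpickle m)).
  by exists W => //; split => //; case: (choice.unpickle m) VW.
move=> z xz; apply: (Vsep x z Ax) => i.
have [W [VW Wx] Wz] := xz (choice.pickle i) I.
by rewrite choice.pickleK in VW; exists W.
Qed.

Lemma pluming_s_space : (forall i, countable (V i)) -> s_space A.
Proof.
move=> cV; have [Vcov Vsep] := V_pluming.
exists (\bigcup_i V i); split; first exact: bigcup_countable.
split; first by move=> W [i _ /V_open].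
exists [set range s | s in [set s | exists2 x, A x & forall i, V i (s i) /\ s i x]].
split.
  move=> _ [s [x Ax sV] <-]; split.
    by move=> _ [i _ <-]; exists i => //; case: (sV i).
  by exists (s j0), j0.
apply/seteqP; split=> [x Ax|z [_ [s [x Ax sV] <-] sz]].
  have /choice [s sV] : forall i, exists W, V i W /\ W x.
    by move=> i; have [W VW Wx] := Vcov x Ax i; exists W.
  by exists (range s); [exists s => //; exists x | move=> _ [i _ <-]; case: (sV i)].
apply: (Vsep x z Ax) => i; exists (s i); first by case: (sV i).
by split; [case: (sV i) | apply: sz; exists i].
Qed.

End Pluming.

Lemma rel_closed_closure {T : topologicalType} (A F : set T) :
  rel_closed A F -> F `<=` A /\ closure F `&` A `<=` F.
Proof.
move=> [C [cC ->]]; split; first by move=> x [].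
by move=> x [clx Ax]; split => //; apply: cC; apply: closureS clx => y [].
Qed.

Section Remainder.
Context {T : topologicalType}.
Hypothesis cT : compact [set: T].
Hypothesis hT : hausdorff_space T.
Variable X : set T.

Lemma locally_menger_lindelof_nbhs : locally_menger X ->
  forall x, X x -> exists2 N, open N /\ cover_lindelof (closure N `&` X) & N x.
Proof.
move=> lmX x Xx; have [W [M [[V [oV ->]] [MX [mM [[Vx _] VM]]]]]] := lmX x Xx.
have [N [oN Nx] NV] := open_nbhs_closure_sub cT hT oV Vx.
exists N => //; split => //.
have -> : closure N `&` X = closure N `&` M.
  apply/seteqP; split=> y [Ny My]; split => //; last exact: MX.
  by apply: VM; split => //; exact: NV.
apply: (@cover_lindelofI_closed _ M (closure N)); last exact: closed_closure.
exact/lindelofP/menger_lindelof.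
Qed.

Variable U : nat -> set (set T).
Hypothesis U_open : forall n W, U n W -> open W.
Hypothesis U_pluming : pluming X U.

Definition shrinking n := [set W' | open W' /\ exists2 W, U n W & closure W' `<=` W].

Lemma shrinking_cover n : X `<=` \bigcup_(W' in shrinking n) W'.
Proof.
move=> x Xx; have [W UW Wx] := proj1 U_pluming x Xx n.
have [W' [oW' W'x] W'W] := open_nbhs_closure_sub cT hT (U_open UW) Wx.
by exists W' => //; split => //; exists W.
Qed.

Lemma pluming_compact_Gdelta (C : set T) : compact C -> C `<=` X ->
  exists H : nat -> set T,
    [/\ forall n, open (H n), forall n, C `<=` H n & \bigcap_n H n `<=` X].
Proof.
move=> cC CX.
have /choice [G HG] : forall i, exists G : set (set T),
    [/\ G `<=` shrinking i, finite_set G & C `<=` \bigcup_(W in G) W].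
  move=> i.
  have [||G' G'sh CG'] := compact_cover_compact cC (f := id) (D := shrinking i).
  - by move=> W [].
  - by move=> x /CX; apply: shrinking_cover.
  exists [set` G']; split => //; first by move=> W /G'sh /set_mem.
have G_open i W : G i W -> open W by case: (HG i) => /(_ W) + _ _ => /[apply] -[].
(* [H n] joins the intersections of [n] shrinkings whose closures meet in a
   point of [C]; compactness of [C] turns a point of every [H n] into a point
   of [C] sharing a member of every [U i] with it. *)
pose S n := [set s : nat -> set T | (forall i, (i < n)%N -> G i (s i)) /\
  C `&` \bigcap_(i < n) closure (s i) !=set0].
exists (fun n => \bigcup_(s in S n) \bigcap_(i < n) s i); split.
- move=> n; apply: bigcup_open => s [Gs _].
  by apply: open_bigcap_lt => i /Gs /G_open.
- move=> n c Cc; have /choice [s Hs] : forall i, exists W, G i W /\ W c.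
    by move=> i; case: (HG i) => _ _ /(_ c Cc) [W]; exists W.
  exists s; last by move=> i _; case: (Hs i).
  split; first by move=> i _; case: (Hs i).
  by exists c; split => // i _; apply: subset_closure; case: (Hs i).
move=> z Hz.
pose K i := C `&` \bigcup_(W in [set W | G i W /\ W z]) closure W.
have [|n|c Kc] := @compact_nat_fip _ K cT.
- move=> i; apply: closedI; first exact: compact_closed.
  apply: closed_bigcup => [|W _]; last exact: closed_closure.
  by case: (HG i) => _ fG _; apply: sub_finite_set fG => W [].
- have [s [Gs [c [Cc cs]]] sz] := Hz n I.
  exists c => i lt; split => //.
  by exists (s i); [split; [exact: Gs | exact: sz] | exact: cs].
have Cc : C c by case: (Kc 0 I).
apply: (proj2 U_pluming c z (CX c Cc)) => i.
have [_ [W [GW Wz] Wc]] := Kc i I.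
have [/(_ W GW) [_ [W' UW' WW']] _ _] := HG i.
by exists W' => //; split; apply: WW'; last apply: subset_closure.
Qed.

Lemma remainder_cover_lindelof : cover_lindelof (~` X).
Proof.
move=> G oG XG.
have compact_closed_set (A : set T) : closed A -> compact A.
  by move=> cA; apply: subclosed_compact cA cT _.
have [||H [oH CH HX]] := @pluming_compact_Gdelta (~` \bigcup_(W in G) W).
- by apply: compact_closed_set; rewrite closedC; exact: bigcup_open.
- by move=> x nGx; apply: contrapT => nXx; apply: nGx; exact: XG.
have /choice [J HJ] : forall n, exists J : {fset set T},
    {subset J <= G} /\ ~` H n `<=` cover [set` J] id.
  move=> n; have [||J JG HJ] := compact_cover_compact (f := id) (D := G)
    (compact_closed_set (~` H n) (open_closedC (oH n))) => //.
  - by move=> x nHx; apply: contrapT => nGx; exact/nHx/CH.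
  by exists J.
exists (\bigcup_n [set` J n]); split.
  by move=> W [n _ /= /(proj1 (HJ n)) /set_mem].
split; first by apply: bigcup_countable => // n _; exact: countable_fset.
move=> y nXy; have [n nHy] : exists n, ~ H n y.
  apply: contrapT => nHy; apply/nXy/HX => n _.
  by apply: contrapT => nHny; apply: nHy; exists n.
by have [W JW Wy] := proj2 (HJ n) y nHy; exists W => //; exists n.
Qed.

Definition hull n W' := xget setT [set W | U n W /\ closure W' `<=` W].

Lemma hull_spec n W' :
  [/\ open (hull n W'), closure W' `<=` hull n W'
    & shrinking n W' -> U n (hull n W')].
Proof.
rewrite /hull; have [exW|nW] := pselect (exists W, U n W /\ closure W' `<=` W).
  by have [UW' W'W'] := xgetPex setT exW; split; [exact: U_open UW' | | move=> _].
rewrite xgetPN => [|W HW]; last by apply: nW; exists W.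
by split; [exact: openT | | move=> -[_ [W UW W'W]]; case: nW; exists W].
Qed.

Section ClosedRemainder.
Variables (F : set T) (B : set (set T)).
Hypothesis F_closed : rel_closed (~` X) F.
Hypothesis B_countable : countable B.
Hypothesis B_good : forall W, B W -> open W /\ cover_lindelof (closure W `&` X).
Hypothesis F_B : F `<=` \bigcup_(W in B) W.

Let Z := \bigcup_(W in B) (closure W `&` X).

Lemma shrinking_enum n : exists e : nat -> set T,
  forall z, Z z -> exists k, shrinking n (e k) /\ e k z.
Proof.
have lZ : cover_lindelof Z.
  by apply: cover_lindelof_bigcup B_countable _ => W /B_good [].
have [||Q [Qsh [cQ ZQ]]] := lZ (shrinking n).
- by move=> W [].
- by move=> z [W _ [_ /shrinking_cover]].
have /pcard_surjP [e surj_e] := cQ.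
exists e => z /ZQ [W QW Wz]; have [k _ ekW] := surj_e W QW.
by exists k; rewrite ekW; split => //; exact: Qsh.
Qed.

Lemma remainder_closed_pluming : exists V : option (nat * nat) -> set (set T),
  [/\ forall i, countable (V i), forall i W, V i W -> rel_open (closure F) W
    & pluming F V].
Proof.
have [FX clF] := rel_closed_closure F_closed.
have /choice [e He] := shrinking_enum.
pose V i := if i is Some (n, k)
  then [set hull n (e n k) `&` closure F; ~` closure (e n k) `&` closure F]
  else [set W `&` closure F | W in B].
exists V; split.
- case=> [[n k]|]; last exact: sub_countable (card_image_le _ _) B_countable.
  by apply: finite_set_countable; rewrite finite_setU; split; exact: finite_set1.
- case=> [[n k]|] W /=; last by move=> [W' /B_good [oW' _] <-]; exists W'.
  move=> [->|->]; first by exists (hull n (e n k)); case: (hull_spec n (e n k)).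
  by exists (~` closure (e n k)); split => //; rewrite openC; exact: closed_closure.
split=> [y Fy [[n k]|]|y z Fy yz].
- have [hull_o cl_hull _] := hull_spec n (e n k).
  have [ey|ney] := pselect (closure (e n k) y).
    exists (hull n (e n k) `&` closure F); first by left.
    by split; [exact: cl_hull | exact: subset_closure].
  exists (~` closure (e n k) `&` closure F); first by right.
  by split => //; exact: subset_closure.
- have [W BW Wy] := F_B Fy; exists (W `&` closure F); first by exists W.
  by split => //; exact: subset_closure.
have [_ [W BW <-] [[Wy _] [Wz clFz]]] := yz None.
have [Xz|nXz] := pselect (X z); last exact: clF.
have Zz : Z z by exists W => //; split => //; exact: subset_closure.
(* The family [Some (n, k)] separates y from z: [hull] lies in [U n] and the
   other set misses [e n k]. *)
have [n nUyz] : exists n, forall W, U n W -> W z -> ~ W y.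
  apply: contrapT => nn; apply: (FX y Fy); apply: (proj2 U_pluming z y Xz) => n.
  apply: contrapT => nW; apply: nn; exists n => W' UW' W'z W'y; apply: nW.
  by exists W'.
have [k [shk ez]] := He n z Zz.
have [_ cl_hull hull_U] := hull_spec n (e n k).
have [_ [->|->] [[hy _] [hz _]]] := yz (Some (n, k)).
  by case: (nUyz _ (hull_U shk) hz hy).
by case: hz; exact: subset_closure.
Qed.

End ClosedRemainder.

End Remainder.

Theorem theorem5p1 (T : topologicalType) (X : set T) :
  compact [set: T] -> hausdorff_space T -> closure X = [set: T] ->
  locally_menger X -> p_space X ->
  exists K : set T, K `<=` ~` X /\ compact K /\
    forall F : set T, F `<=` ~` X -> rel_closed (~` X) F -> F `&` K = set0 ->
      lindelof F /\ p_space F /\ s_space F.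
Proof.
move=> cT hT dX lmX pX.
have [U [U_open U_pluming]] := p_space_dense_pluming dX pX.
pose good N := open N /\ cover_lindelof (closure N `&` X).
exists (~` \bigcup_(N in good) N); split; [|split].
- move=> x nNx Xx; apply: nNx.
  by have [N gN Nx] := locally_menger_lindelof_nbhs cT hT lmX Xx; exists N.
- apply: subclosed_compact cT _ => //; rewrite closedC.
  by apply: bigcup_open => N [].
move=> F _ F_closed FK.
have F_good : F `<=` \bigcup_(N in good) N.
  move=> y Fy; apply: contrapT => nNy.
  by have : (F `&` ~` \bigcup_(N in good) N) y by []; rewrite FK.
have lF : cover_lindelof F.
  have [C [cC ->]] := F_closed.
  exact: cover_lindelofI_closed (remainder_cover_lindelof cT hT U_open U_pluming) cC.
have [B [Bgood [cB FB]]] := lF good (fun N => @proj1 _ _) F_good.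
split; first exact/lindelofP.
have [V [cV V_open V_pluming]] :=
  remainder_closed_pluming cT hT U_open U_pluming F_closed cB Bgood FB.
split; first exact: (pluming_p_space None V_open V_pluming).
exact: (pluming_s_space None V_open V_pluming cV).
Qed.
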